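(* For every finite connected chordal graph $G$, the set $D(G)=\{v: e(v)=\operatorname{diam}(G)\}$ of diametral vertices is a radius certificate of $G$: for every vertex $u$ there is $t\in D(G)$ with $d(u,t)\ge\operatorname{rad}(G)$.
   Context: A graph is chordal if every induced cycle of length at least 4 has a chord. $d$ shortest-path distance, $e(v)=\max_u d(v,u)$, $\operatorname{rad}(G)=\min_v e(v)$, $\operatorname{diam}(G)=\max_v e(v)$. *)

From mathcomp Require Import all_boot.
Set Implicit Arguments. Unset Strict Implicit. Unset Printing Implicit Defensive.

Section Graph.
Variables (T : finType) (e : rel T).

Definition simple_graph := symmetric e /\ irreflexive e.

Definition connected_graph := forall x y : T, connect e x y.

Fixpoint ball (k : nat) (x : T) : {set T} :=
  if k is k'.+1 then
    ball k' x :|: [set y | [exists z in ball k' x, e z y]]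
  else [set x].

(* shortest-path distance; for a connected graph every distance is < #|T|
   (the value #|T| only occurs for unreachable pairs) *)
Definition dist (x y : T) : nat := find (fun k => y \in ball k x) (iota 0 #|T|).

Definition ecc (v : T) : nat := \max_(u : T) dist v u.
Definition diam : nat := \max_(v : T) ecc v.
(* minimum of eccentricities; the neutral element diam is >= every ecc v,
   so this is exactly min_v ecc v when T is nonempty *)
Definition rad : nat := \big[minn/diam]_(v : T) ecc v.

Definition diametral : {set T} := [set v | ecc v == diam].

(* every cycle c (pairwise distinct vertices, consecutive ones adjacent,
   including last--first) of length >= 4 has a chord: two vertices that are
   not consecutive on the cycle but adjacent *)
Definition chordal : Prop :=
  forall (x : T) (s : seq T), let c := x :: s in
    uniq c -> 4 <= size c -> cycle e c ->
    exists i j, [/\ i.+1 < j, j < size c, ~~ ((i == 0) && (j == (size c).-1))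
                 & e (nth x c i) (nth x c j)].
End Graph.

From mathcomp Require Import all_boot zify.
From Stdlib Require Import Classical_Prop.
Set Implicit Arguments. Unset Strict Implicit. Unset Printing Implicit Defensive.

(* Let k be the largest distance from u to a diametral vertex; it suffices to
   find a vertex of eccentricity at most k.  Since diam <= 2k, any two disks of
   radius k either both contain u (diametral centres) or overlap strictly
   (d(y, z) <= e(y) < diam <= 2k when y is not diametral).  In a chordal graph
   such a family of disks around cliques has a common vertex: by Dirac's lemma
   there is a simplicial vertex v; deleting it leaves an isometric subgraph,
   and each disk around a clique containing v is replaced by a disk around the
   clique minus v or, if the clique is {v}, by a disk of radius one less around
   the neighbourhood of v, which preserves the hypotheses and the conclusion. *)

Section Distance.
Variables (T : finType) (e : rel T).
Local Notation ball := (ball e).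
Local Notation d := (dist e).

Lemma mem_ball0 x y : (y \in ball 0 x) = (y == x).
Proof. exact: in_set1. Qed.

Lemma ballSP k x y :
  reflect (y \in ball k x \/ exists2 z, z \in ball k x & e z y) (y \in ball k.+1 x).
Proof.
rewrite /= in_setU inE; apply: (iffP orP) => -[-> | h]; try by left.
- by case/exists_inP: h => z; right; exists z.
- by case: h => z hz hzy; right; apply/exists_inP; exists z.
Qed.

Lemma ball_edge k x y z : y \in ball k x -> e y z -> z \in ball k.+1 x.
Proof. by move=> hy hyz; apply/ballSP; right; exists y. Qed.

Lemma ball_le k k' x y : k <= k' -> y \in ball k x -> y \in ball k' x.
Proof.
move=> /subnKC <-; elim: (k' - k) => [|n IH] hy; first by rewrite addn0.
by rewrite addnS; apply/ballSP; left; apply: IH.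
Qed.

Lemma ball_trans a b x y z : y \in ball a x -> z \in ball b y -> z \in ball (a + b) x.
Proof.
move=> hy; elim: b z => [|b IH] z; first by rewrite mem_ball0 addn0 => /eqP ->.
rewrite addnS => /ballSP [/IH /(ball_le (leqnSn _)) // | [w /IH hw hwz]].
exact: ball_edge hwz.
Qed.

Lemma path_ball x p : path e x p -> last x p \in ball (size p) x.
Proof.
elim: p x => [|y p IH] x /=; first by rewrite mem_ball0.
case/andP=> hxy /IH; apply: (@ball_trans 1).
by apply: ball_edge hxy; rewrite mem_ball0.
Qed.

Lemma ball_path k x y :
  y \in ball k x -> exists p, [/\ path e x p, last x p = y & size p <= k].
Proof.
elim: k y => [|k IH] y; first by rewrite mem_ball0 => /eqP ->; exists [::].
case/ballSP=> [/IH [p [hp hl hs]] | [z /IH [p [hp hl hs]] hzy]].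
  by exists p; split; rewrite // ltnW.
by exists (rcons p y); rewrite rcons_path last_rcons size_rcons hp hl hzy.
Qed.

Lemma ball_connect k x y : y \in ball k x -> connect e x y.
Proof. by case/ball_path=> p [hp <- _]; apply/connectP; exists p. Qed.

Lemma dist_le k x y : y \in ball k x -> d x y <= k.
Proof.
move=> hy; rewrite leqNgt; apply/negP => hlt.
have hk : k < #|T|.
  by apply: leq_trans hlt _; rewrite -[X in _ <= X](size_iota 0 #|T|) find_size.
by move: (before_find 0 hlt); rewrite nth_iota // add0n hy.
Qed.

Lemma dist_ball x y : connect e x y -> y \in ball (d x y) x.
Proof.
case/connectP=> p hp ->; case/shortenP: hp => q hq /card_uniqP hu _.
have hsz : size q < #|T| by move: (max_card (mem (x :: q))); rewrite hu.
have hex : has (fun k => last x q \in ball k x) (iota 0 #|T|).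
  by apply/hasP; exists (size q); rewrite ?mem_iota //; apply: path_ball.
have := nth_find 0 hex; rewrite nth_iota ?add0n //.
by rewrite -[X in _ < X](size_iota 0 #|T|) -has_find.
Qed.

Lemma distxx x : d x x = 0.
Proof. by apply/eqP; rewrite -leqn0; apply: dist_le; rewrite mem_ball0. Qed.

Lemma dist_eq0 x y : connect e x y -> d x y = 0 -> x = y.
Proof. by move=> /dist_ball + h; rewrite h mem_ball0 => /eqP. Qed.

Lemma dist_edge x y : e x y -> d x y <= 1.
Proof. by move=> hxy; apply: dist_le; apply: ball_edge hxy; rewrite mem_ball0. Qed.

Lemma dist_path x p : path e x p -> d x (last x p) <= size p.
Proof. by move/path_ball/dist_le. Qed.

Lemma exists_geodesic x y :
  connect e x y -> exists p, [/\ path e x p, last x p = y & size p = d x y].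
Proof.
move/dist_ball/ball_path=> [p [hp hl hs]]; exists p; split=> //.
by apply/eqP; rewrite eqn_leq hs -hl dist_path.
Qed.

Lemma path_nth_ball x p i j : path e x p -> i <= j -> j <= size p ->
  nth x (x :: p) j \in ball (j - i) (nth x (x :: p) i).
Proof.
move=> /(pathP x) hp hij; elim: j hij => [|j IH].
  by rewrite leqn0 => /eqP ->; rewrite mem_ball0.
rewrite leq_eqVlt => /orP [/eqP <- _|hij hj]; first by rewrite subnn mem_ball0.
rewrite subSn //; apply: ball_edge (IH hij (ltnW hj)) _; exact: hp.
Qed.

Section Geodesic.
Variables (x : T) (p : seq T).
Hypotheses (hp : path e x p) (hgeo : size p = d x (last x p)).
Local Notation c := (nth x (x :: p)).

Lemma geodesic_dist_nth i j : i <= j -> j <= size p -> j - i <= d (c i) (c j).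
Proof.
move=> hij hj.
have hxi : c i \in ball i x.
  by have := path_nth_ball hp (leq0n i) (leq_trans hij hj); rewrite subn0.
have hji := path_nth_ball hp hij hj.
have hjl : last x p \in ball (size p - j) (c j).
  by rewrite (last_nth x x); apply: path_nth_ball.
have := dist_le (ball_trans (ball_trans hxi (dist_ball (ball_connect hji))) hjl).
by rewrite -hgeo; lia.
Qed.

Lemma geodesic_chordless i j : i.+1 < j -> j <= size p -> ~~ e (c i) (c j).
Proof.
move=> hij hj; apply/negP => /dist_edge.
apply/negP; rewrite -ltnNge (leq_trans _ (geodesic_dist_nth (ltnW (ltnW hij)) hj)) //.
by rewrite ltn_subRL addn1.
Qed.

Lemma geodesic_uniq : uniq (x :: p).
Proof.
apply/(uniqPn x) => -[i [j [hij hj heq]]].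
have := geodesic_dist_nth (ltnW hij) hj; rewrite heq distxx; lia.
Qed.

End Geodesic.

End Distance.

Section Metric.
Variables (T : finType) (e : rel T).
Hypotheses (esym : symmetric e) (econn : connected_graph e).
Local Notation ball := (ball e).
Local Notation d := (dist e).

Lemma ball_sym k x y : y \in ball k x -> x \in ball k y.
Proof.
elim: k x y => [|k IH] x y; first by rewrite !mem_ball0 eq_sym.
case/ballSP=> [/IH /(ball_le (leqnSn _)) // | [z /IH hz hzy]].
have hyz : z \in ball 1 y by apply: (@ball_edge _ _ 0 y y); rewrite ?mem_ball0 // esym.
by rewrite -add1n; apply: ball_trans hyz hz.
Qed.

Lemma distC x y : d x y = d y x.
Proof.
by apply/eqP; rewrite eqn_leq; apply/andP; split; apply/dist_le/ball_sym/dist_ball.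
Qed.

Lemma dist_triangle x y z : d x z <= d x y + d y z.
Proof. exact/dist_le/(ball_trans (dist_ball (econn x y)) (dist_ball (econn y z))). Qed.

Lemma dist_gt0 x y : (0 < d x y) = (x != y).
Proof.
apply/idP/idP => [|/eqP hxy]; first by apply: contraTneq => ->; rewrite distxx.
by rewrite lt0n; apply/eqP => /(dist_eq0 (econn x y)).
Qed.

Lemma dist_closer_nbr x y : x != y -> exists2 z, e x z & d z y = (d x y).-1.
Proof.
have [[|z p] [/= hp hl hs]] := exists_geodesic (econn x y).
  by rewrite -hl eqxx.
move=> _; case/andP: hp => hxz hp; exists z => //.
have := dist_path hp; rewrite hl; have := dist_triangle x z y; have := dist_edge hxz.
rewrite -hs /=; lia.
Qed.

End Metric.

Section Cliques.
Variables (T : finType) (e : rel T).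

Definition induced (H : {set T}) : rel T := [rel a b | [&& a \in H, b \in H & e a b]].

Lemma induced_sym H : symmetric e -> symmetric (induced H).
Proof. by move=> esym a b; rewrite /induced /= esym andbCA. Qed.

Lemma induced_sub (H H' : {set T}) : H \subset H' -> subrel (induced H) (induced H').
Proof. by move=> /subsetP hH a b /and3P [ha hb hab]; apply/and3P; rewrite ?hH. Qed.

Lemma induced_path_sub (H : {set T}) x p :
  x \in H -> path (induced H) x p -> {subset x :: p <= H}.
Proof.
elim: p x => [|y p IH] x hx /=; first by move=> _ z /[1!inE] /eqP ->.
case/andP=> /and3P [_ hy _] hp z; rewrite in_cons => /orP [/eqP -> // |].
exact: IH.
Qed.

Lemma connect_induced_mem (H : {set T}) x y :
  x \in H -> connect (induced H) x y -> y \in H.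
Proof.
by move=> hx /connectP [p hp ->]; apply: (induced_path_sub hx hp); apply: mem_last.
Qed.

Definition clique (K : {set T}) := [forall a in K, forall b in K, (a != b) ==> e a b].

Lemma cliqueP (K : {set T}) : reflect {in K &, forall a b, a != b -> e a b} (clique K).
Proof.
apply: (iffP forall_inP) => [h a b ha hb hab | h a ha].
  by move/forall_inP: (h a ha) => /(_ b hb) /implyP; apply.
by apply/forall_inP => b hb; apply/implyP; apply: h.
Qed.

Lemma clique_sub (K K' : {set T}) : K' \subset K -> clique K -> clique K'.
Proof.
move=> /subsetP hsub /cliqueP hK; apply/cliqueP => a b ha hb.
by apply: hK; apply: hsub.
Qed.

Lemma clique1 x : clique [set x].
Proof. by apply/cliqueP => a b /set1P -> /set1P ->; rewrite eqxx. Qed.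

Definition nbhd (W : {set T}) v := [set a in W | e v a].

Definition simplicial (W : {set T}) v := clique (nbhd W v).

Definition simplicial_pair (W : {set T}) := exists v1 v2,
  [/\ v1 \in W, v2 \in W, v1 != v2, ~~ e v1 v2 & simplicial W v1 && simplicial W v2].

Lemma simplicial_sub (W Z : {set T}) v :
  nbhd W v \subset Z -> simplicial Z v -> simplicial W v.
Proof.
move=> /subsetP hsub; apply: clique_sub; apply/subsetP => a ha.
by rewrite inE (hsub a ha); case/setIdP: ha.
Qed.

Lemma clique_simplicial (K : {set T}) v : clique K -> simplicial K v.
Proof. by apply: clique_sub; rewrite /nbhd setIdE subsetIl. Qed.

Lemma simplicial_outside_clique (Z S : {set T}) z :
  clique S -> z \in Z :\: S -> clique Z \/ simplicial_pair Z ->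
  exists2 v, v \in Z :\: S & simplicial Z v.
Proof.
move=> /cliqueP hS hz [/clique_simplicial hZ | [v1 [v2 [h1 h2 hne hnadj hs]]]].
  by exists z.
case/andP: hs => hs1 hs2.
case: (boolP (v1 \in S)) => hv1; last by exists v1; rewrite // inE hv1.
case: (boolP (v2 \in S)) => hv2; last by exists v2; rewrite // inE hv2.
by rewrite hS in hnadj.
Qed.

End Cliques.

Lemma uniq_path_interior (T : finType) (s t : T) (R : {set T}) p k :
  uniq (s :: p) -> last s p = t -> {subset s :: p <= s |: (t |: R)} ->
  0 < k < size p -> nth s (s :: p) k \in R.
Proof.
move=> hu hl hpR /andP [hk0 hkp]; set c := nth s (s :: p).
have hk : k < size (s :: p) by rewrite ltnS ltnW.
have hcs : c k != c 0 by rewrite nth_uniq //= -?lt0n // ltnS ltnW.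
have hct : c k != t.
  by rewrite -hl (last_nth s) -/c nth_uniq //= ?neq_ltn ?hkp // ltnS ltnW.
have := hpR (c k) (mem_nth s hk).
by rewrite !inE (negbTE hcs) (negbTE hct).
Qed.

Section Chordal.
Variables (T : finType) (e : rel T).
Hypotheses (esym : symmetric e) (eirr : irreflexive e) (echord : chordal e).

Lemma chordal_nbrs_separated x s t (R : {set T}) :
  x \notin R -> {in R, forall a, ~~ e x a} -> e x s -> e x t -> s != t -> ~~ e s t ->
  ~~ connect (induced e (s |: (t |: R))) s t.
Proof.
move=> hxR hRx hxs hxt hsnt hst; set H := s |: (t |: R).
(* a geodesic from s to t inside H, closed up through x, is a chordless cycle *)
apply/negP => /exists_geodesic [p [hp hl hsz]]; rewrite -hl in hsz.
have hp2 : 1 < size p.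
  case: p hp hl {hsz} => [_ /= hts | y [|z q]] //; first by rewrite hts eqxx in hsnt.
  by rewrite /= andbT => /and3P [_ _ hsy] /= hyt; move: hst; rewrite -hyt hsy.
have hsH : s \in H by rewrite !inE eqxx.
have hpH := induced_path_sub hsH hp.
have hu := geodesic_uniq hp hsz.
set c := nth s (s :: p).
have hcH k : k <= size p -> c k \in H by move=> hk; apply/hpH/mem_nth.
have hcR k : 0 < k < size p -> c k \in R := uniq_path_interior hu hl hpH.
have hxp : x \notin s :: p.
  apply/negP => /hpH; rewrite !inE => /or3P [/eqP hx | /eqP hx | hx].
  - by move: hxs; rewrite hx eirr.
  - by move: hxt; rewrite hx eirr.
  - by rewrite hx in hxR.
have hcyc : cycle e (x :: s :: p).
  rewrite /= rcons_path hxs hl esym hxt andbT.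
  by apply: sub_path hp => a b /and3P [].
have huc : uniq (x :: s :: p) by rewrite cons_uniq hxp hu.
have hsz4 : 4 <= size (x :: s :: p) by rewrite /= !ltnS.
have [[|i] [[|j] [//= hij hj hend hedge]]] := echord huc hsz4 hcyc.
  rewrite (set_nth_default s) // in hedge.
  have hjR : c j \in R.
    by apply: hcR; rewrite -ltnS hij ltn_neqAle -eqSS hend; exact: hj.
  by move: (hRx _ hjR); rewrite hedge.
have hij' : i <= j := ltnW (ltnW hij).
rewrite !(set_nth_default s) ?ltnS ?(leq_trans hij') // in hedge.
have := geodesic_chordless hp hsz (i := i) (j := j) hij hj.
by rewrite /induced /= hedge !hcH ?(leq_trans hij').
Qed.

Section DiracStep.
Variables (W : {set T}) (x y : T).
Hypotheses (hxW : x \in W) (hyW : y \in W) (hxy : x != y) (hnxy : ~~ e x y).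

(* A is the component of y among the non-neighbours of x, and S the neighbours
   of x adjacent to A: S separates A from x, so it is a clique. *)
Let R := [set z in W | (z != x) && ~~ e x z].
Let A := [set z | connect (induced e R) y z].
Let S := [set z in W | e x z && [exists a in A, e z a]].

Let memR z : (z \in R) = [&& z \in W, z != x & ~~ e x z]. Proof. by rewrite inE. Qed.
Let hyR : y \in R. Proof. by rewrite inE hyW eq_sym hxy. Qed.
Let hxR : x \notin R. Proof. by rewrite inE eqxx andbF. Qed.
Let hRx : {in R, forall a, ~~ e x a}. Proof. by move=> a /setIdP [_ /andP []]. Qed.
Let hRW : R \subset W. Proof. by apply/subsetP => z /setIdP []. Qed.
Let hAR : A \subset R.
Proof. by apply/subsetP => z; rewrite inE; apply: connect_induced_mem. Qed.
Let memA z : (z \in A) = connect (induced e R) y z. Proof. by rewrite inE. Qed.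
Let memS z : (z \in S) = [&& z \in W, e x z & [exists a in A, e z a]].
Proof. by rewrite inE. Qed.
Let hyA : y \in A. Proof. by rewrite memA connect0. Qed.

Lemma separator_clique : clique e S.
Proof.
apply/cliqueP => s t /setIdP [_ /andP [hxs /exists_inP [a ha hsa]]].
move=> /setIdP [_ /andP [hxt /exists_inP [b hb htb]]] hst.
apply/negPn/negP => hnst.
have /negP := chordal_nbrs_separated hxR hRx hxs hxt hst hnst; apply.
set H := s |: (t |: R).
have hRH : R \subset H by rewrite !subsetU ?subxx ?orbT.
have haR := subsetP hAR a ha; have hbR := subsetP hAR b hb.
have hab : connect (induced e R) a b.
  rewrite !memA in ha hb; apply: (connect_trans _ hb).
  by rewrite (sym_connect_sym (induced_sym _ esym)).
have hsa' : induced e H s a by rewrite /induced /= hsa (subsetP hRH _ haR) !inE eqxx.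
have hbt : induced e H b t.
  by rewrite /induced /= esym htb (subsetP hRH _ hbR) !inE eqxx orbT.
have habH : connect (induced e H) a b.
  by apply: connect_sub hab => c d /(induced_sub hRH) /connect1.
exact: connect_trans (connect_trans (connect1 hsa') habH) (connect1 hbt).
Qed.

Lemma component_closed a w : a \in A -> w \in W -> e a w -> w \in A :|: S.
Proof.
move=> ha hw haw; have haR := subsetP hAR a ha; rewrite memA in ha.
case: (boolP (w \in R)) => hwR.
  by rewrite inE memA (connect_trans ha) // connect1 // /induced /= haR hwR.
move: hwR; rewrite memR hw /= negb_and !negbK => /orP [/eqP hwx | hxw].
  by move: (hRx haR); rewrite -hwx esym haw.
rewrite inE memS hw hxw /=; apply/orP; right; apply/exists_inP.
by exists a; rewrite ?memA // esym.
Qed.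

Lemma dirac_step :
  (forall Z : {set T}, Z \proper W -> Z != set0 -> clique e Z \/ simplicial_pair e Z) ->
  simplicial_pair e W.
Proof.
move=> IH.
have hxA : x \notin A by apply: contra hxR; apply: (subsetP hAR).
have hA1W : A :|: S \subset W.
  by rewrite subUset (subset_trans hAR hRW); apply/subsetP => z; rewrite memS => /andP [].
have hxA1 : x \notin A :|: S by rewrite in_setU memS eirr andbF orbF.
have [v1 /setDP [hv1 hv1S] hs1] :
    exists2 v, v \in (A :|: S) :\: S & simplicial e (A :|: S) v.
  apply: (simplicial_outside_clique separator_clique (z := y)).
    by rewrite in_setD in_setU hyA memS (negbTE hnxy) andbF.
  apply: IH; first by apply/properP; split; last exists x.
  by apply/set0Pn; exists y; rewrite in_setU hyA.
have hv1A : v1 \in A by move: hv1; rewrite in_setU (negbTE hv1S) orbF.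
have [v2 /setDP [/setDP [hv2W hv2A] hv2S] hs2] :
    exists2 v, v \in (W :\: A) :\: S & simplicial e (W :\: A) v.
  apply: (simplicial_outside_clique separator_clique (z := x)).
    by rewrite !in_setD hxW hxA memS eirr andbF.
  apply: IH; last by apply/set0Pn; exists x; rewrite in_setD hxA.
  by apply/properP; split; [apply: subsetDl | exists y; rewrite // in_setD hyA].
have hv2A1 : v2 \notin A :|: S by rewrite in_setU negb_or hv2A.
exists v1, v2; split.
- exact: (subsetP hA1W).
- exact: hv2W.
- by apply: contraNneq hv2A => <-.
- by apply: contra hv2A1; apply: component_closed.
- apply/andP; split.
    apply: simplicial_sub hs1; apply/subsetP => w /setIdP [hw hvw].
    exact: component_closed hvw.
  apply: simplicial_sub hs2; apply/subsetP => w /setIdP [hw hvw].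
  rewrite in_setD hw andbT; apply: contra hv2A1 => hwA.
  by apply: (component_closed hwA hv2W); rewrite esym.
Qed.

End DiracStep.

Lemma chordal_clique_or_simplicial_pair (W : {set T}) :
  W != set0 -> clique e W \/ simplicial_pair e W.
Proof.
elim: {W}_.+1 {-2}W (ltnSn #|W|) => // n IH W hWn hW0.
case: (boolP (clique e W)) => hW; [by left | right].
move/forall_inPn: hW => [x hx /forall_inPn [y hy]].
rewrite negb_imply => /andP [hxy hnxy].
apply: (dirac_step hx hy hxy hnxy) => Z hZ.
by apply: IH; apply: leq_trans (proper_card hZ) _.
Qed.

Lemma chordal_simplicial_exists (W : {set T}) :
  W != set0 -> exists2 v, v \in W & simplicial e W v.
Proof.
move=> hW0; have [hW | [v [_ [hv _ _ _ /andP [hs _]]]]] :=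
  chordal_clique_or_simplicial_pair hW0; last by exists v.
by have [v hv] := set0Pn _ hW0; exists v; rewrite // clique_simplicial.
Qed.

End Chordal.

Section Disks.
Variables (T : finType) (e : rel T).
Hypotheses (esym : symmetric e) (eirr : irreflexive e) (econn : connected_graph e).
Hypothesis echord : chordal e.
Local Notation d := (dist e).

(* The subgraph induced by W is isometric: geodesics between vertices of W can
   be chosen inside W. *)
Definition isometric (W : {set T}) := forall x y, x \in W -> y \in W -> x != y ->
  exists2 z, z \in W & e x z /\ d z y = (d x y).-1.

Definition clique_in (W K : {set T}) := [/\ K \subset W, K != set0 & clique e K].

(* A pair (K, r) stands for the disk of radius r around the set K. *)
Definition in_disk (P : {set T} * nat) y := exists2 a, a \in P.1 & d a y <= P.2.

Definition disks_overlap (P Q : {set T} * nat) :=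
  exists a b, [/\ a \in P.1, b \in Q.1 & d a b < P.2 + Q.2].

Lemma clique_in_set1 (W : {set T}) x : x \in W -> clique_in W [set x].
Proof.
by move=> hx; split; rewrite ?sub1set ?clique1 //; apply/set0Pn; exists x; rewrite set11.
Qed.

Lemma disks_overlapC (P Q : {set T} * nat) : disks_overlap P Q -> disks_overlap Q P.
Proof.
by case=> a [b [ha hb hab]]; exists b, a; rewrite distC // addnC.
Qed.

Lemma dist_clique (K : {set T}) a b : clique e K -> a \in K -> b \in K -> d a b <= 1.
Proof.
move=> /cliqueP hK ha hb; have [-> | hab] := eqVneq a b; first by rewrite distxx.
exact/dist_edge/hK.
Qed.

Lemma isometric_setT : isometric [set: T].
Proof.
move=> x y _ _ /(dist_closer_nbr econn) [z hxz hz].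
by exists z; rewrite ?inE.
Qed.

Section Shrink.
Variables (W : {set T}) (v : T).
Hypotheses (hvW : v \in W) (hiso : isometric W) (hsimp : simplicial e W v).
Hypothesis hWv : W :\ v != set0.
Local Notation N := (nbhd e W v).

(* Every geodesic leaving v goes through N, which accounts for the radius
   decrease when the disk is centred at v alone. *)
Definition shrink (P : {set T} * nat) : {set T} * nat :=
  if v \notin P.1 then P
  else if P.1 :\ v == set0 then (N, P.2.-1) else (P.1 :\ v, P.2).

Lemma nbhd_closer y : y \in W -> y != v -> exists2 b, b \in N & d b y = (d v y).-1.
Proof.
move=> hy hyv; have hvy : v != y by rewrite eq_sym.
by have [z hz [hvz hd]] := hiso hvW hy hvy; exists z; rewrite // inE hz.
Qed.

Lemma nbhd_sub : N \subset W :\ v.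
Proof.
apply/subsetP => a /setIdP [ha hva]; rewrite in_setD1 ha andbT.
by apply: contraTneq hva => ->; rewrite eirr.
Qed.

Lemma nbhd_set0 : N != set0.
Proof.
have [z /setD1P [hzv hz]] := set0Pn _ hWv; have [b hb _] := nbhd_closer hz hzv.
by apply/set0Pn; exists b.
Qed.

Lemma nbhd_dist_le a y : a \in N -> y \in W -> y != v -> d a y <= d v y.
Proof.
move=> ha hy hyv; have [b hb hdb] := nbhd_closer hy hyv.
have hpos : 0 < d v y by rewrite dist_gt0 // eq_sym.
apply: leq_trans (dist_triangle econn a b y) _.
by rewrite hdb -[leqRHS](prednK hpos) -add1n leq_add2r (dist_clique hsimp ha hb).
Qed.

Lemma isometric_setD1 : isometric (W :\ v).
Proof.
move=> x y /setD1P [hxv hx] /setD1P [hyv hy] hxy.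
have [z hz [hxz hdz]] := hiso hx hy hxy.
have [hzv | hzv] := eqVneq z v; last by exists z; rewrite ?in_setD1 ?hzv.
subst z; exfalso.
have [b hb hdb] := nbhd_closer hy hyv.
have hxN : x \in N by rewrite inE hx esym.
have := dist_triangle econn x b y; have := dist_clique hsimp hxN hb.
have : 0 < d v y by rewrite dist_gt0 // eq_sym.
rewrite hdb hdz; move: (d x y) (d x b) => n m.
by clear -n m; lia.
Qed.

Lemma setD1_nbhd (K : {set T}) : clique_in W K -> v \in K -> K :\ v \subset N.
Proof.
case=> /subsetP hKW _ /cliqueP hK hvK; apply/subsetP => a /setD1P [hav haK].
by rewrite inE hKW //= hK // eq_sym.
Qed.

Lemma clique_in_shrink (P : {set T} * nat) :
  clique_in W P.1 -> clique_in (W :\ v) (shrink P).1.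
Proof.
case=> hKW hK0 hK; rewrite /shrink; case: ifPn => [hvK | /negPn hvK].
  split=> //; apply/subsetP => a ha; rewrite in_setD1 (subsetP hKW _ ha) andbT.
  by apply: contraNneq hvK => <-.
case: ifPn => hKv /=.
  by split; [exact: nbhd_sub | exact: nbhd_set0 | exact: hsimp].
split=> //; first exact: setSD.
by apply: clique_sub hK; apply: subD1set.
Qed.

Lemma shrink_keep (P : {set T} * nat) a :
  a \in P.1 -> a != v -> a \in (shrink P).1 /\ (shrink P).2 = P.2.
Proof.
move=> ha hav; rewrite /shrink; case: ifPn => _; first by split.
have haK : a \in P.1 :\ v by rewrite in_setD1 hav.
by case: ifPn => [/eqP hK0 | _]; first by rewrite hK0 inE in haK.
Qed.

Lemma in_disk_shrink_back (P : {set T} * nat) c :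
  0 < P.2 -> in_disk (shrink P) c -> in_disk P c.
Proof.
move=> hr; rewrite /shrink; case: ifPn => // /negPn hvK.
case: ifPn => _ [a ha hac] /=.
  case/setIdP: ha => _ hva; exists v => //.
  apply: leq_trans (dist_triangle econn v a c) _.
  by rewrite -(prednK hr) -add1n leq_add ?dist_edge.
by exists a; [case/setD1P: ha | ].
Qed.

Lemma shrink_proj (P : {set T} * nat) a b :
  clique_in W P.1 -> 0 < P.2 -> a \in P.1 -> b \in W -> b != v ->
  exists2 a', a' \in (shrink P).1 & d a' b + P.2 <= d a b + (shrink P).2.
Proof.
move=> hP hr ha hb hbv.
have [hav | hav] := eqVneq a v; last first.
  by have [ha' ->] := shrink_keep ha hav; exists a.
subst a; rewrite /shrink ha /=; case: ifPn => [_ | hK0] /=.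
  have [b' hb' hdb] := nbhd_closer hb hbv; exists b' => //.
  have : 0 < d v b by rewrite dist_gt0 // eq_sym.
  by rewrite hdb; move: (d v b) hr => n; clear; lia.
have [a' ha'] := set0Pn _ hK0; exists a' => //.
by rewrite leq_add2r nbhd_dist_le // (subsetP (setD1_nbhd hP ha)).
Qed.

Lemma in_disk_shrink (P : {set T} * nat) y :
  clique_in W P.1 -> 0 < P.2 -> y \in W -> y != v -> in_disk P y -> in_disk (shrink P) y.
Proof.
move=> hP hr hy hyv [a ha hay]; have [a' ha' h] := shrink_proj hP hr ha hy hyv.
by exists a' => //; rewrite -(leq_add2r P.2) (leq_trans h) // addnC leq_add2l.
Qed.

Lemma in_disk_shrink_nbr (P : {set T} * nat) a0 :
  clique_in W P.1 -> 0 < P.2 -> a0 \in N -> in_disk P v -> in_disk (shrink P) a0.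
Proof.
move=> hP hr ha0 [a ha hav]; rewrite /shrink.
case: ifPn => [hvK | /negPn hvK].
  have hanv : a != v by apply: contraNneq hvK => <-.
  have haW : a \in W by case: hP => /subsetP hKW _ _; apply: hKW.
  by exists a; rewrite // distC // (leq_trans (nbhd_dist_le ha0 haW hanv)) // distC.
case: ifPn => [_ | hK0]; first by exists a0; rewrite /= ?distxx.
have [a' ha'] := set0Pn _ hK0; exists a' => //=.
exact: leq_trans (dist_clique hsimp (subsetP (setD1_nbhd hP hvK) _ ha') ha0) hr.
Qed.

Lemma exists_shrink_point u : u \in W -> exists2 u', u' \in W :\ v &
  forall P, clique_in W P.1 -> 0 < P.2 -> in_disk P u -> in_disk (shrink P) u'.
Proof.
move=> hu; have [-> | huv] := eqVneq u v.
  have [a0 ha0] := set0Pn _ nbhd_set0.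
  by exists a0 => [|P hP hr]; [exact: (subsetP nbhd_sub) | apply: in_disk_shrink_nbr].
by exists u => [|P hP hr]; [rewrite in_setD1 huv | apply: in_disk_shrink].
Qed.

Lemma overlap_shrink_witness (P Q : {set T} * nat) a b :
  clique_in W P.1 -> 0 < P.2 -> a \in P.1 -> b \in Q.1 -> b \in W -> b != v ->
  d a b < P.2 + Q.2 -> disks_overlap (shrink P) (shrink Q).
Proof.
move=> hP hr ha hb hbW hbv hab.
have [a' ha' hda] := shrink_proj hP hr ha hbW hbv.
have [hb' hs] := shrink_keep hb hbv.
by exists a', b; split=> //; rewrite hs; move: hda hab; clear; lia.
Qed.

Lemma overlap_shrink_at (P Q : {set T} * nat) :
  clique_in W P.1 -> clique_in W Q.1 -> 0 < P.2 -> 0 < Q.2 -> P <> Q ->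
  v \in P.1 -> v \in Q.1 -> disks_overlap (shrink P) (shrink Q).
Proof.
case: P Q => [K r] [L s] hK hL /= hr hs hKL hvK hvL; rewrite /shrink /= hvK hvL /=.
have [n hn] := set0Pn _ nbhd_set0.
case: ifPn => [hK0 | hK0]; case: ifPn => [hL0 | hL0].
- have hKv : K = [set v] by rewrite -(setD1K hvK) (eqP hK0) setU0.
  have hLv : L = [set v] by rewrite -(setD1K hvL) (eqP hL0) setU0.
  have hrs : r != s by apply/eqP => hrs; apply: hKL; rewrite hKv hLv hrs.
  by exists n, n; split=> //=; rewrite distxx; move: hr hs hrs; clear; lia.
- have [l hl] := set0Pn _ hL0.
  exists l, l; split=> //=; last by rewrite distxx addn_gt0 hs orbT.
  exact: (subsetP (setD1_nbhd hL hvL)).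
- have [k hk] := set0Pn _ hK0.
  exists k, k; split=> //=; last by rewrite distxx addn_gt0 hr.
  exact: (subsetP (setD1_nbhd hK hvK)).
have [k hk] := set0Pn _ hK0; have [l hl] := set0Pn _ hL0.
have hkN := subsetP (setD1_nbhd hK hvK) _ hk; have hlN := subsetP (setD1_nbhd hL hvL) _ hl.
exists k, l; split=> //=; have := dist_clique hsimp hkN hlN.
by move: hr hs; clear; lia.
Qed.

Lemma overlap_shrink (P Q : {set T} * nat) :
  clique_in W P.1 -> clique_in W Q.1 -> 0 < P.2 -> 0 < Q.2 -> P <> Q ->
  disks_overlap P Q -> disks_overlap (shrink P) (shrink Q).
Proof.
move=> hP hQ hr hs hPQ [a [b [ha hb hab]]].
have haW : a \in W by case: hP => /subsetP hKW _ _; apply: hKW.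
have hbW : b \in W by case: hQ => /subsetP hLW _ _; apply: hLW.
have [hbv | hbv] := eqVneq b v; last first.
  exact: overlap_shrink_witness hP hr ha hb hbW hbv hab.
have [hav | hav] := eqVneq a v; first by subst; apply: overlap_shrink_at.
apply: disks_overlapC; apply: (overlap_shrink_witness hQ hs hb ha haW hav).
by rewrite distC // addnC.
Qed.

End Shrink.

Definition overlap_or_share u (P Q : {set T} * nat) :=
  (in_disk P u /\ in_disk Q u) \/ disks_overlap P Q.

Lemma helly_radius0 (W : {set T}) (F : {set T} * nat -> Prop) u P :
  (forall P, F P -> clique_in W P.1) ->
  (forall P Q, F P -> F Q -> P <> Q -> overlap_or_share u P Q) ->
  F P -> P.2 = 0 -> exists2 c, c \in W & forall Q, F Q -> in_disk Q c.
Proof.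
move=> hcl hcomp hP hP0; have [hKW hK0 hK] := hcl P hP.
have [c hc hcu] : exists2 c, c \in P.1 & in_disk P u -> c = u.
  case: (classic (in_disk P u)) => [[a ha hau] | hnu].
    exists a => // _; apply: dist_eq0 (econn a u) _.
    by apply/eqP; rewrite -leqn0 -hP0.
  by have [c hc] := set0Pn _ hK0; exists c.
exists c => [|Q hQ]; first exact: (subsetP hKW).
have [-> | hQP] := eqVneq Q P; first by exists c; rewrite ?distxx ?hP0.
have hPQ : P <> Q by apply/eqP; rewrite eq_sym.
case: (hcomp P Q hP hQ hPQ) => [[/hcu -> //] | [a [b [ha hb hab]]]].
exists b; rewrite // distC //; have := dist_triangle econn c a b.
by have := dist_clique hK hc ha; rewrite hP0 in hab; move: hab; clear; lia.
Qed.

Theorem chordal_disks_helly (W : {set T}) (F : {set T} * nat -> Prop) u :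
  isometric W -> u \in W -> (forall P, F P -> clique_in W P.1) ->
  (forall P Q, F P -> F Q -> P <> Q -> overlap_or_share u P Q) ->
  exists2 c, c \in W & forall P, F P -> in_disk P c.
Proof.
elim: {W}_.+1 {-2}W (ltnSn #|W|) F u => // n IH W hWn F u hiso hu hcl hcomp.
case: (classic (exists2 P, F P & P.2 = 0)) => [[P hP hP0] | hpos].
  exact: helly_radius0 hcl hcomp hP hP0.
have {}hpos P : F P -> 0 < P.2.
  by move=> hP; rewrite lt0n; apply/eqP => hP0; apply: hpos; exists P.
have [v hv hsimp] : exists2 v, v \in W & simplicial e W v.
  by apply: chordal_simplicial_exists => //; apply/set0Pn; exists u.
have [hWv | hWv] := eqVneq (W :\ v) set0.
  have hWv1 a : a \in W -> a = v.
    by move=> ha; have := in_set0 a; rewrite -hWv in_setD1 ha andbT => /negbFE /eqP.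
  exists u => // P hP; have [hKW hK0 _] := hcl P hP.
  have [a ha] := set0Pn _ hK0; exists a => //.
  by rewrite (hWv1 a (subsetP hKW _ ha)) -(hWv1 u hu) distxx.
have [u' hu' hmove] := exists_shrink_point hv hiso hsimp hWv hu.
pose F' P' := exists2 P, F P & shrink W v P = P'.
have [c /setD1P [_ hc] hcF'] : exists2 c, c \in W :\ v & forall P', F' P' -> in_disk P' c.
  apply: (IH _ _ F' u' (isometric_setD1 hv hiso hsimp) hu').
- by rewrite -ltnS (leq_trans _ hWn) // (cardsD1 v W) hv.
- by move=> _ [P hP <-]; apply: clique_in_shrink => //; apply: hcl.
- move=> _ _ [P hP <-] [Q hQ <-] hPQ'.
  have hPQ : P <> Q by move=> hPQ; apply: hPQ'; rewrite hPQ.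
  case: (hcomp P Q hP hQ hPQ) => [[hPu hQu] | hov]; [left; split | right].
  + exact: hmove (hcl P hP) (hpos P hP) hPu.
  + exact: hmove (hcl Q hQ) (hpos Q hQ) hQu.
  + exact: overlap_shrink (hcl P hP) (hcl Q hQ) (hpos P hP) (hpos Q hQ) hPQ hov.
exists c => // P hP; apply: (in_disk_shrink_back (W := W) (v := v) (hpos P hP)).
by apply: hcF'; exists P.
Qed.

End Disks.

Section Eccentricity.
Variables (T : finType) (e : rel T).
Hypotheses (esym : symmetric e) (econn : connected_graph e).
Local Notation d := (dist e).

Lemma dist_le_ecc x y : d x y <= ecc e x.
Proof. exact: (leq_bigmax (F := d x)). Qed.

Lemma ecc_le_diam x : ecc e x <= diam e.
Proof. exact: (leq_bigmax (F := ecc e)). Qed.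

Lemma rad_le_ecc x : rad e <= ecc e x.
Proof.
rewrite /rad; elim: (index_enum T) (mem_index_enum x) => // a r IH.
rewrite big_cons inE => /orP [/eqP <- | /IH]; [exact: geq_minl | exact/leq_trans/geq_minr].
Qed.

Lemma ecc_lt_diam x : x \notin diametral e -> ecc e x < diam e.
Proof. by rewrite inE ltn_neqAle ecc_le_diam andbT. Qed.

Lemma diametral_exists (u : T) : exists v, v \in diametral e.
Proof.
have hT : 0 < #|T| by apply/card_gt0P; exists u.
by have [v hv] := eq_bigmax (ecc e) hT; exists v; rewrite inE /diam hv.
Qed.

Lemma diam_le_double u k :
  (forall t, t \in diametral e -> d u t <= k) -> diam e <= k + k.
Proof.
move=> hk; have [v hvD] := diametral_exists u.
have [t ht] : {t | ecc e v = d v t} by apply: eq_bigmax; apply/card_gt0P; exists u.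
have hdiam : diam e = d v t by move: hvD; rewrite inE => /eqP <-.
have htD : t \in diametral e.
  by rewrite inE eqn_leq ecc_le_diam hdiam distC // dist_le_ecc.
rewrite hdiam (leq_trans (dist_triangle econn v u t)) // distC //.
by rewrite leq_add ?hk.
Qed.

Lemma singleton_disks_overlap_or_share u k y z :
  (forall t, t \in diametral e -> d u t <= k) ->
  overlap_or_share e u ([set y], k) ([set z], k).
Proof.
move=> hk; have hD := diam_le_double hk.
have hnear a b : a \notin diametral e -> d a b < k + k.
  move=> ha; apply: leq_trans hD.
  exact: leq_ltn_trans (dist_le_ecc a b) (ecc_lt_diam ha).
case: (boolP (y \in diametral e)) => hy; last by right; exists y, z; rewrite !set11 hnear.
case: (boolP (z \in diametral e)) => hz; last first.
  by right; exists y, z; rewrite !set11 distC // hnear.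
by left; split; [exists y | exists z]; rewrite ?set11 // distC // hk.
Qed.

End Eccentricity.

Theorem proposition11 (T : finType) (e : rel T) :
  simple_graph e -> connected_graph e -> chordal e ->
  forall u : T, exists2 t, t \in diametral e & rad e <= dist e u t.
Proof.
move=> [esym eirr] econn echord u.
have [v hv] := diametral_exists e u.
case: (arg_maxnP (dist e u) hv) => t ht htmax; exists t => //.
pose F (P : {set T} * nat) := exists y, P = ([set y], dist e u t).
have [c _ hc] : exists2 c, c \in [set: T] & forall P, F P -> in_disk e P c.
  apply: (chordal_disks_helly esym eirr econn echord (isometric_setT econn) (in_setT u)).
- by move=> P [y ->]; apply: clique_in_set1; rewrite inE.
- by move=> P Q [y ->] [z ->] _; apply: singleton_disks_overlap_or_share.
apply: leq_trans (rad_le_ecc e c) _; apply/bigmax_leqP => y _.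
by have [a /set1P -> hay] := hc _ (ex_intro _ y erefl); rewrite distC.
Qed.
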